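(* Let $N=\{p\in(\mathbf{R}^3)^4: p_4=0,\ \|p\|=1\}$ (the space of tetrahedra $p=(p_1,p_2,p_3,p_4)$ modulo translation and positive scaling) and let $Y$ be the vector field on $N$ given by $Y_p=D(\pi)_p(\nabla\operatorname{vol}_p)$, where $\operatorname{vol}(p)=\frac16((p_2-p_1)\times(p_3-p_1))\cdot(p_4-p_1)$. If $p\in N$ is a singularity of $Y$ (i.e. $Y_p=0$) and $p_1,p_2,p_3,p_4$ are not collinear, then $p$ is a regular tetrahedron, i.e. all six distances $\|p_i-p_j\|$, $i\neq j$, are equal.
   Context: $\tau(p_1,\ldots,p_4)=(p_1-p_4,p_2-p_4,p_3-p_4,0)$, $\sigma(p)=p/\|p\|$, $\pi=\sigma\circ\tau$, defined on $(\mathbf{R}^3)^4$ minus the configurations with all $p_i$ equal; $D(\pi)$ is its differential and $\nabla$ is the Euclidean gradient on $\mathbf{R}^{12}$. *)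

From HB Require Import structures.
From mathcomp Require Import all_boot all_order all_algebra.
From mathcomp Require Import all_classical all_reals all_analysis.
Set Implicit Arguments. Unset Strict Implicit. Unset Printing Implicit Defensive.
Import Order.TTheory GRing.Theory Num.Theory.
Import numFieldNormedType.Exports.
Local Open Scope ring_scope.

(* A configuration (p_1,...,p_4) in (R^3)^4 is a 4x3 real matrix; row i is
   the point p_{i+1}.  Index 0..3 in Rocq corresponds to 1..4 in the paper. *)
Definition config (R : realType) := 'M[R]_(4, 3).

Definition pt {R : realType} (p : config R) (i : nat) : 'rV[R]_3 := row (inord i) p.

(* Euclidean norm on R^12 = (R^3)^4 and Euclidean distance in R^3.
   (The normed-space norm of mathcomp-analysis on matrices is the max norm,
   which is only used implicitly for the topology/derivative.) *)
Definition enorm {R : realType} (p : config R) : R :=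
  Num.sqrt (\sum_(i < 4) \sum_(k < 3) p i k ^+ 2).

Definition dist3 {R : realType} (x y : 'rV[R]_3) : R :=
  Num.sqrt (\sum_(k < 3) (x ord0 k - y ord0 k) ^+ 2).

Definition dot3 {R : realType} (x y : 'rV[R]_3) : R :=
  \sum_(k < 3) x ord0 k * y ord0 k.

Definition cross3 {R : realType} (x y : 'rV[R]_3) : 'rV[R]_3 :=
  \row_(k < 3)
    (if k == 0 :> nat then x ord0 (inord 1) * y ord0 (inord 2) - x ord0 (inord 2) * y ord0 (inord 1)
     else if k == 1 :> nat then x ord0 (inord 2) * y ord0 (inord 0) - x ord0 (inord 0) * y ord0 (inord 2)
     else x ord0 (inord 0) * y ord0 (inord 1) - x ord0 (inord 1) * y ord0 (inord 0)).

Definition tau {R : realType} (p : config R) : config R :=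
  \matrix_(i < 4, k < 3) (p i k - p (inord 3) k).

Definition sigma {R : realType} (p : config R) : config R := (enorm p)^-1 *: p.

Definition piN {R : realType} (p : config R) : config R := sigma (tau p).

Definition vol {R : realType} (p : config R) : R :=
  6^-1 * dot3 (cross3 (pt p 1 - pt p 0) (pt p 2 - pt p 0)) (pt p 3 - pt p 0).

Definition grad {R : realType} (f : config R -> R) (p : config R) : config R :=
  \matrix_(i < 4, k < 3) ('D_(delta_mx i k) f p).

Definition Yfield {R : realType} (p : config R) : config R :=
  'D_(grad vol p) piN p.

Definition inN {R : realType} (p : config R) : Prop :=
  pt p 3 = 0 /\ enorm p = 1.

Definition collinear {R : realType} (p : config R) : Prop :=
  exists a d : 'rV[R]_3, forall i : nat, (i < 4)%N -> exists t : R, pt p i = a + t *: d.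

Definition regular_tetra {R : realType} (p : config R) : Prop :=
  forall i j k l : nat, (i < 4)%N -> (j < 4)%N -> (k < 4)%N -> (l < 4)%N ->
    i <> j -> k <> l -> dist3 (pt p i) (pt p j) = dist3 (pt p k) (pt p l).

(* Along N the differential of the normalisation is D(pi)_p g = tau g - <p, tau g> p, so
   Y_p = 0 says tau (grad vol) = c p for a scalar c.  The rows of grad vol sum to zero,
   hence d vol / d p_i = c (p_i - m) with m the centroid.  If c = 0 all the face normals
   vanish and the points are collinear.  Otherwise every p_i - m is orthogonal to the
   face opposite p_i, like d vol / d p_i; with m the centroid this forces all
   |p_i - m| to be equal and all products (p_i - m).(p_j - m), i <> j, to be equal, so
   all edges have the same length. *)

From HB Require Import structures.
From mathcomp Require Import all_boot all_order all_algebra.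
From mathcomp Require Import all_classical all_reals all_analysis.
From mathcomp Require Import ring lra.
Import Order.TTheory GRing.Theory Num.Theory.
Import numFieldNormedType.Exports.
Local Open Scope classical_set_scope.
Local Open Scope ring_scope.

Section DirectionalDerivative.
Context {R : numFieldType} {V W : normedModType R}.

Lemma derive_along_line (f : V -> W) (a v : V) :
  'D_v f a = 'D_1 (fun h : R => f (a + h *: v)) 0.
Proof.
rewrite /derive; do 2 f_equal; apply/funext => h /=.
by rewrite scale0r !addr0 [h%:A]mulr1 [a + _]addrC.
Qed.

Lemma is_deriveZl {f : V -> R} {x v : V} {df : R} (w : W) :
  is_derive x v f df -> is_derive x v (fun y => f y *: w) (df *: w).
Proof.
case=> dfx <-.
pose q h := h^-1 *: (((fun y => f y *: w) \o shift x) (h *: v) - f x *: w).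
have qE : q = (fun h => (h^-1 *: ((f \o shift x) (h *: v) - f x)) *: w).
  by apply/funext => h; rewrite /q /= -scalerBl scalerA.
have qw : q @ 0^' --> 'D_v f x *: w by rewrite qE; apply: cvgZr_tmp.
apply: DeriveDef; first by apply/cvg_ex; exists ('D_v f x *: w).
exact: cvg_lim qw.
Qed.

End DirectionalDerivative.

Section Normalization.
Context {R : realType}.

Definition sqnorm_line (c d h : R) : R := 1 + h * (2 * c) + h ^+ 2 * d.

Definition inv_norm_line (c d h : R) : R := (Num.sqrt (sqnorm_line c d h))^-1.

Lemma sqnorm_line0 (c d : R) : sqnorm_line c d 0 = 1.
Proof. by rewrite /sqnorm_line mul0r expr0n /= mul0r !addr0. Qed.

Lemma is_derive_sqnorm_line (c d : R) : is_derive (0 : R) 1 (sqnorm_line c d) (2 * c).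
Proof.
have dsq : is_derive (0 : R) 1 (fun y : R => y ^+ 2) 0.
  by have := is_deriveX 2 (is_derive_id (0 : R) 1); rewrite expr1 mulr0 scale0r.
have := is_deriveD (is_derive_cst (1 : R) (0 : R) 1)
  (is_deriveD (is_deriveZl (2 * c) (is_derive_id (0 : R) 1)) (is_deriveZl d dsq)).
have -> : cst 1 + ((fun y : R => y *: (2 * c)) + (fun y => y ^+ 2 *: d)) = sqnorm_line c d.
  by apply/funext => y; rewrite /sqnorm_line /= addrA.
by rewrite add0r scale0r addr0 [1 *: _]mul1r.
Qed.

Lemma is_derive_inv_norm_line (c d : R) : is_derive (0 : R) 1 (inv_norm_line c d) (- c).
Proof.
have dsqrt : is_derive (sqnorm_line c d 0) 1 Num.sqrt (2 * Num.sqrt (sqnorm_line c d 0))^-1.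
  by apply: is_derive1_sqrt; rewrite sqnorm_line0.
have norm0 : (Num.sqrt \o sqnorm_line c d) 0 != 0 by rewrite /= sqnorm_line0 sqrtr1 oner_neq0.
have := is_deriveV norm0 (is_derive1_comp dsqrt (is_derive_sqnorm_line c d)).
rewrite /= sqnorm_line0 sqrtr1 expr1n invr1 mulr1 scaleN1r mulrA mulVf ?mul1r //.
Qed.

Lemma is_derive_scaled_inv_norm_line (c d : R) :
  is_derive (0 : R) 1 (fun h => h * inv_norm_line c d h) 1.
Proof.
have := is_deriveM (is_derive_id (0 : R) 1) (is_derive_inv_norm_line c d).
by rewrite /inv_norm_line sqnorm_line0 sqrtr1 invr1 scale0r add0r scale1r.
Qed.

End Normalization.

Section ProjectionDerivative.
Context {R : realType}.

Definition cdot (p q : config R) : R := \sum_(i < 4) \sum_(k < 3) p i k * q i k.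

Definition sqnorm (p : config R) : R := \sum_(i < 4) \sum_(k < 3) p i k ^+ 2.

Lemma sqnormDZ (p w : config R) (h : R) :
  sqnorm (p + h *: w) = sqnorm p + h * (2 * cdot p w) + h ^+ 2 * sqnorm w.
Proof.
rewrite /sqnorm /cdot !mulr_sumr -!big_split /=; apply: eq_bigr => i _.
rewrite !mulr_sumr -!big_split /=; apply: eq_bigr => k _.
by rewrite !mxE; ring.
Qed.

Lemma sqnorm_inN (p : config R) : inN p -> sqnorm p = 1.
Proof.
case=> _ p1; have sqnorm_ge0 : 0 <= sqnorm p.
  by apply: sumr_ge0 => i _; apply: sumr_ge0 => k _; exact: sqr_ge0.
by rewrite -(sqr_sqrtr sqnorm_ge0) -/(enorm p) p1 expr1n.
Qed.

Lemma tauDZ (p g : config R) (h : R) : tau (p + h *: g) = tau p + h *: tau g.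
Proof. by apply/matrixP => i k; rewrite !mxE; ring. Qed.

Lemma tau_id (p : config R) : pt p 3 = 0 -> tau p = p.
Proof.
move=> p3; apply/matrixP => i k; rewrite !mxE.
by have := congr1 (fun x : 'rV[R]_3 => x ord0 k) p3; rewrite /pt !mxE => ->; rewrite subr0.
Qed.

Lemma piN_line (p g : config R) (h : R) : inN p ->
  let s := inv_norm_line (cdot p (tau g)) (sqnorm (tau g)) h in
  piN (p + h *: g) = s *: p + (h * s) *: tau g.
Proof.
move=> Np /=; rewrite /piN /sigma tauDZ tau_id; last by case: Np.
rewrite /enorm -/(sqnorm _) sqnormDZ sqnorm_inN // -/(sqnorm_line _ _ _).
by rewrite -/(inv_norm_line _ _ _) scalerDr scalerA [_ * h]mulrC.
Qed.

Lemma derive_piN (p g : config R) : inN p -> 'D_g piN p = tau g - cdot p (tau g) *: p.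
Proof.
move=> Np; rewrite derive_along_line.
set c := cdot p (tau g); set d := sqnorm (tau g).
have -> : (fun h : R => piN (p + h *: g)) = (fun h => inv_norm_line c d h *: p)
    + (fun h => (h * inv_norm_line c d h) *: tau g).
  by apply/funext => h; rewrite piN_line.
have := is_deriveD (is_deriveZl p (is_derive_inv_norm_line c d))
                   (is_deriveZl (tau g) (is_derive_scaled_inv_norm_line c d)).
by move=> [_ ->]; rewrite scale1r scaleNr addrC.
Qed.

End ProjectionDerivative.

Section VolumeGradient.
Context {R : realType}.

(* [coords p i k] is the k-th coordinate of p_(i+1); the indices are natural numbers so
   that case analysis on concrete indices computes. *)
Definition coords (p : config R) (i k : nat) : R := p (inord i) (inord k).

Definition edge (x : nat -> nat -> R) (i j k : nat) : R := x i k - x j k.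

Definition dot (u v : nat -> R) : R := u 0%N * v 0%N + u 1%N * v 1%N + u 2%N * v 2%N.

Definition cross (u v : nat -> R) (k : nat) : R :=
  if k == 0%N then u 1%N * v 2%N - u 2%N * v 1%N
  else if k == 1%N then u 2%N * v 0%N - u 0%N * v 2%N
  else u 0%N * v 1%N - u 1%N * v 0%N.

Definition vol_partial (x : nat -> nat -> R) (i k : nat) : R :=
  6^-1 * (if i == 1%N then cross (edge x 2 0) (edge x 3 0) k
          else if i == 2%N then cross (edge x 3 0) (edge x 1 0) k
          else if i == 3%N then cross (edge x 1 0) (edge x 2 0) k
          else - (cross (edge x 2 0) (edge x 3 0) k + cross (edge x 3 0) (edge x 1 0) k
                  + cross (edge x 1 0) (edge x 2 0) k)).

Lemma big_ord3 {V : nmodType} (F : 'I_3 -> V) : \sum_(k < 3) F k = F (inord 0) + F (inord 1) + F (inord 2).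
Proof.
rewrite !big_ord_recl big_ord0 addr0 addrA.
by congr (F _ + F _ + F _); apply: val_inj; rewrite /= inordK.
Qed.

Lemma vol_coordsE (p : config R) : let x := coords p in vol p = 6^-1 *
  (((x 1 1 - x 0 1) * (x 2 2 - x 0 2) - (x 1 2 - x 0 2) * (x 2 1 - x 0 1)) * (x 3 0 - x 0 0)
 + ((x 1 2 - x 0 2) * (x 2 0 - x 0 0) - (x 1 0 - x 0 0) * (x 2 2 - x 0 2)) * (x 3 1 - x 0 1)
 + ((x 1 0 - x 0 0) * (x 2 1 - x 0 1) - (x 1 1 - x 0 1) * (x 2 0 - x 0 0)) * (x 3 2 - x 0 2)).
Proof. by rewrite /vol /dot3 big_ord3 /cross3 /pt /coords !mxE !inordK. Qed.

Lemma coordsDZ_delta (p : config R) (i : 'I_4) (k : 'I_3) (h : R) (a b : nat) :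
  (a < 4)%N -> (b < 3)%N ->
  coords (p + h *: delta_mx i k) a b = coords p a b + h * ((val i == a) && (val k == b))%:R.
Proof.
move=> a4 b3; rewrite /coords !mxE -!val_eqE /= !inordK //.
by rewrite [(a == _)]eq_sym [(b == _)]eq_sym.
Qed.

Lemma vol_line (p : config R) (i : 'I_4) (k : 'I_3) (h : R) :
  vol (p + h *: delta_mx i k) = vol p + h * vol_partial (coords p) i k.
Proof.
rewrite !vol_coordsE /= !coordsDZ_delta // /vol_partial /cross /edge.
by case: i => [[|[|[|[|i]]]] ?] //; case: k => [[|[|[|k]]] ?] //=; ring.
Qed.

Lemma grad_volE (p : config R) : grad vol p = \matrix_(i, k) vol_partial (coords p) i k.
Proof.
apply/matrixP => i k; rewrite !mxE derive_along_line.
have -> : (fun h : R => vol (p + h *: delta_mx i k))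
    = cst (vol p) + (fun h => h *: vol_partial (coords p) i k).
  by apply/funext => h; rewrite vol_line.
have [_ ->] := is_deriveD (is_derive_cst (vol p) (0 : R) 1)
  (is_deriveZl (vol_partial (coords p) i k) (is_derive_id (0 : R) 1)).
by rewrite add0r scale1r.
Qed.

Lemma vol_partial_sum (x : nat -> nat -> R) (k : nat) :
  vol_partial x 0 k + vol_partial x 1 k + vol_partial x 2 k + vol_partial x 3 k = 0.
Proof. rewrite /vol_partial /=; ring. Qed.

Lemma vol_partial_orth (x : nat -> nat -> R) (i j l : nat) :
  (i < 4)%N -> (j < 4)%N -> (l < 4)%N -> i != j -> i != l -> j != l ->
  dot (vol_partial x i) (edge x j l) = 0.
Proof.
rewrite /dot /vol_partial /cross /edge.
by case: i j l => [|[|[|[|i]]]] [|[|[|[|j]]]] [|[|[|[|l]]]] //= *; ring.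
Qed.

End VolumeGradient.

Section SingularPoints.
Context {R : realType}.

Lemma Yfield_eq0_vol_partial (p : config R) : inN p -> Yfield p = 0 ->
  exists c, forall a b, (a < 4)%N -> (b < 3)%N ->
    vol_partial (coords p) a b - vol_partial (coords p) 3 b = c * coords p a b.
Proof.
move=> Np; rewrite /Yfield derive_piN // grad_volE => /eqP; rewrite subr_eq0 => /eqP Y.
eexists => a b a4 b3; have := congr1 (fun M : config R => M (inord a) (inord b)) Y.
by rewrite !mxE !inordK //; apply.
Qed.

Definition centroid (x : nat -> nat -> R) (k : nat) : R := (x 0 k + x 1 k + x 2 k + x 3 k) / 4.

Lemma vol_partial_centroid (x : nat -> nat -> R) (c : R) :
  (forall a b, (a < 4)%N -> (b < 3)%N -> vol_partial x a b - vol_partial x 3 b = c * x a b) ->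
  forall a b, (a < 4)%N -> (b < 3)%N -> vol_partial x a b = c * (x a b - centroid x b).
Proof.
move=> E a b a4 b3; have := vol_partial_sum x b.
have := E 0%N b isT b3; have := E 1%N b isT b3; have := E 2%N b isT b3.
have := E 3%N b isT b3; have := E a b a4 b3.
rewrite /centroid; lra.
Qed.

End SingularPoints.

Section Collinearity.
Context {R : realType}.

Lemma dot_self_eq0 (u : nat -> R) : dot u u = 0 -> forall k, (k < 3)%N -> u k = 0.
Proof. by rewrite /dot => uu0 [|[|[|k]]] //= _; nra. Qed.

Lemma crossC (u v : nat -> R) (k : nat) : cross u v k = - cross v u k.
Proof. by rewrite /cross; case: ifP => _; [|case: ifP => _]; ring. Qed.

Lemma cross_eq0_proj (u v : nat -> R) : dot u u != 0 ->
  (forall k, (k < 3)%N -> cross u v k = 0) ->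
  forall k, (k < 3)%N -> v k = dot u v / dot u u * u k.
Proof.
move=> uu0 uv0 k k3; apply: (mulIf uu0); rewrite mulrAC divfK //.
have := uv0 0%N isT; have := uv0 1%N isT; have := uv0 2%N isT.
rewrite /cross /dot /=.
case: k k3 => [|[|[|k]]] //= _ c2 c1 c0.
- by move: (congr1 ( *%R (u 1%N)) c2) (congr1 ( *%R (u 2%N)) c1); rewrite !mulr0; lra.
- by move: (congr1 ( *%R (u 2%N)) c0) (congr1 ( *%R (u 0%N)) c2); rewrite !mulr0; lra.
- by move: (congr1 ( *%R (u 0%N)) c1) (congr1 ( *%R (u 1%N)) c0); rewrite !mulr0; lra.
Qed.

Lemma pt_line (p : config R) (i j : nat) (t : R) :
  (forall k, (k < 3)%N -> edge (coords p) i 0 k = t * edge (coords p) j 0 k) ->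
  pt p i = pt p 0 + t *: (pt p j - pt p 0).
Proof.
move=> ij; apply/rowP => k; rewrite !mxE.
by have := ij k (ltn_ord k); rewrite /edge /coords inord_val => <-; ring.
Qed.

Lemma collinear_of_cross_eq0 (p : config R) : let x := coords p in
  (forall i j k, (i < 4)%N -> (j < 4)%N -> (k < 3)%N -> cross (edge x i 0) (edge x j 0) k = 0) ->
  collinear p.
Proof.
move=> x cross0.
suff [j [j4 par]] : exists j, (j < 4)%N /\ forall i, (i < 4)%N ->
    exists t, forall k, (k < 3)%N -> edge x i 0 k = t * edge x j 0 k.
  exists (pt p 0), (pt p j - pt p 0) => i /par [t ij].
  by exists t; apply: pt_line.
case: (pselect (exists2 j, (j < 4)%N & dot (edge x j 0) (edge x j 0) != 0)).
  move=> [j j4 jj0]; exists j; split=> // i i4.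
  exists (dot (edge x j 0) (edge x i 0) / dot (edge x j 0) (edge x j 0)).
  exact: cross_eq0_proj (fun k => cross0 j i k j4 i4).
move=> degenerate; exists 0%N; split=> // i i4; exists 0 => k k3.
rewrite mul0r; apply: dot_self_eq0 k3; apply/eqP.
by apply: contra_notT degenerate => ii0; exists i.
Qed.

Lemma collinear_of_vol_partial_eq0 (p : config R) : let x := coords p in
  (forall a b, (a < 4)%N -> (b < 3)%N -> vol_partial x a b = 0) -> collinear p.
Proof.
move=> x grad0; apply: collinear_of_cross_eq0 => i j k i4 j4 k3.
have inv6 : (6 : R)^-1 != 0 by rewrite invr_eq0 pnatr_eq0.
have c23 : cross (edge x 2 0) (edge x 3 0) k = 0.
  by apply: (mulfI inv6); rewrite mulr0 -(grad0 1%N k isT k3).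
have c31 : cross (edge x 3 0) (edge x 1 0) k = 0.
  by apply: (mulfI inv6); rewrite mulr0 -(grad0 2%N k isT k3).
have c12 : cross (edge x 1 0) (edge x 2 0) k = 0.
  by apply: (mulfI inv6); rewrite mulr0 -(grad0 3%N k isT k3).
case: i j i4 j4 => [|[|[|[|i]]]] [|[|[|[|j]]]] // _ _;
  try by rewrite /cross /edge; case: (k) => [|[|[|?]]] /=; ring.
all: by rewrite ?c12 ?c23 ?c31 // crossC ?c12 ?c23 ?c31 oppr0.
Qed.

End Collinearity.

Section Regularity.
Context {R : realType}.

Lemma centroid_orth_of_vol_partial {x : nat -> nat -> R} {c : R} : c != 0 ->
  (forall a b, (a < 4)%N -> (b < 3)%N -> vol_partial x a b = c * (x a b - centroid x b)) ->
  forall i j l, (i < 4)%N -> (j < 4)%N -> (l < 4)%N -> i != j -> i != l -> j != l ->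
    dot (fun k => x i k - centroid x k) (edge x j l) = 0.
Proof.
move=> c0 grad_centroid i j l i4 j4 l4 ij il jl; apply: (mulfI c0).
by rewrite mulr0 -(vol_partial_orth x i j l i4 j4 l4 ij il jl) /dot !grad_centroid //; ring.
Qed.

Lemma sqdist_eq_of_centroid_orth {x : nat -> nat -> R} :
  (forall i j l, (i < 4)%N -> (j < 4)%N -> (l < 4)%N -> i != j -> i != l -> j != l ->
     dot (fun k => x i k - centroid x k) (edge x j l) = 0) ->
  forall i j, (i < 4)%N -> (j < 4)%N -> i <> j ->
    dot (edge x i j) (edge x i j) = dot (edge x 0 1) (edge x 0 1).
Proof.
move=> orth.
have := orth 0 1 2; have := orth 0 1 3; have := orth 0 2 3; have := orth 1 0 2.
have := orth 1 0 3; have := orth 1 2 3; have := orth 2 0 1; have := orth 2 0 3.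
have := orth 2 1 3; have := orth 3 0 1; have := orth 3 0 2; have := orth 3 1 2.
rewrite /dot /edge /centroid; do 12 move=> /(_ isT isT isT isT isT isT) ?.
by case=> [|[|[|[|i]]]] [|[|[|[|j]]]] //= *; lra.
Qed.

Lemma dist3_coords (p : config R) (i j : nat) :
  dist3 (pt p i) (pt p j) = Num.sqrt (dot (edge (coords p) i j) (edge (coords p) i j)).
Proof. by rewrite /dist3 big_ord3 /pt !mxE /dot /edge /coords. Qed.

End Regularity.

Theorem mainTheorem6 (R : realType) (p : config R) :
  inN p -> Yfield p = 0 -> ~ collinear p -> regular_tetra p.
Proof.
move=> Np /(Yfield_eq0_vol_partial p Np) [c /vol_partial_centroid grad_centroid] noncoll.
have [c0|c0] := eqVneq c 0.
  exfalso; apply/noncoll/collinear_of_vol_partial_eq0 => a b a4 b3.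
  by rewrite grad_centroid // c0 mul0r.
have orth := centroid_orth_of_vol_partial c0 grad_centroid.
move=> i j k l i4 j4 k4 l4 ij kl; rewrite !dist3_coords.
rewrite (sqdist_eq_of_centroid_orth orth i j i4 j4 ij).
by rewrite (sqdist_eq_of_centroid_orth orth k l k4 l4 kl).
Qed.
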